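(* Let $k$ be a positive integer, $A\subseteq[k]$, and let $c_\alpha\in\mathbb{Z}$ for each $\alpha\in A$. Suppose that for all pairs $\alpha,\alpha'\in A$: (1) $\mathrm{lcm}(\alpha,\alpha')\in A$, and (2) $(c_{\alpha'}-c_\alpha)\cdot\mathrm{lcm}(\alpha,\alpha')\equiv 0\pmod k$. Then there exists $c\in\mathbb{Z}$ such that $(c-c_\alpha)\alpha\equiv 0\pmod k$ for all $\alpha\in A$.
   Context: $[k]=\{1,\dots,k\}$. *)

From mathcomp Require Import all_boot all_order all_algebra.

From mathcomp Require Import all_boot all_order all_algebra.
From mathcomp Require Import ring.
Import GRing.Theory Num.Theory.
Local Open Scope ring_scope.

(* The congruence (c - c_a) a = 0 (mod k) says exactly that c = c_a modulo
   m_a := k / gcd(a, k), so we need a common solution of the finitely many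
   congruences c = c_a (mod m_a).  By the Chinese remainder theorem for
   non-coprime moduli this exists as soon as c_a = c_a' modulo gcd(m_a, m_a')
   for all a, a'.  As gcd(., k) distributes over lcm, gcd(m_a, m_a') divides
   m_lcm(a,a'), and hypothesis (2) is precisely c_a = c_a' (mod m_lcm(a,a')). *)

Lemma dvdn_mulr_divgcd (k a y : nat) : (0 < k)%N ->
  (k %| y * a)%N = (k %/ gcdn a k %| y)%N.
Proof.
move=> k_gt0; have g_gt0 : (0 < gcdn a k)%N by rewrite gcdn_gt0 k_gt0 orbT.
have kE : k = (k %/ gcdn a k * gcdn a k)%N by rewrite divnK // dvdn_gcdr.
apply/idP/idP => dvd_k.
- have : (k %| y * gcdn a k)%N by rewrite muln_gcdr dvdn_gcd dvd_k dvdn_mull.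
  by rewrite {1}kE dvdn_pmul2r.
- rewrite {1}kE; apply: dvdn_trans (dvdn_mul (dvdnn y) (dvdn_gcdl a k)).
  by rewrite dvdn_pmul2r.
Qed.

Lemma dvdz_mulr_divgcd (k a : nat) (y : int) : (0 < k)%N ->
  (k%:Z %| y * a%:Z)%Z = ((k %/ gcdn a k)%:Z %| y)%Z.
Proof. by move=> k_gt0; rewrite !dvdzE abszM dvdn_mulr_divgcd. Qed.

Lemma dvdn_gcd_divgcd_lcm (k a b : nat) :
  (gcdn (k %/ gcdn a k) (k %/ gcdn b k) %| k %/ gcdn (lcmn a b) k)%N.
Proof.
have dvd_lcm_k : (lcmn (gcdn a k) (gcdn b k) %| k)%N by rewrite dvdn_lcm !dvdn_gcdr.
rewrite Order.NatDvd.meetUl dvdn_divRL // muln_lcmr dvdn_lcm.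
by rewrite -!dvdn_divRL ?dvdn_gcdr // ?dvdn_gcdl ?dvdn_gcdr.
Qed.

Lemma chinese_gcdz (m1 m2 r1 r2 : int) : (gcdz m1 m2 %| r2 - r1)%Z ->
  exists x, (m1 %| x - r1)%Z /\ (m2 %| x - r2)%Z.
Proof.
have [u [v Bezout]] := Bezoutz m1 m2.
move=> /dvdzP[q r21E]; exists (r1 + q * u * m1); split.
  by rewrite addrC addKr dvdz_mull.
have -> : r1 + q * u * m1 - r2 = q * (u * m1 + v * m2) - (r2 - r1) - q * v * m2.
  by ring.
by rewrite Bezout r21E subrr sub0r -mulNr dvdz_mull.
Qed.

Lemma dvdn_gcd_biglcm (I : eqType) (s : seq I) (m : I -> nat) (d y : nat) :
  {in s, forall i, gcdn (m i) d %| y}%N ->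
  (gcdn (\big[lcmn/1%N]_(i <- s) m i) d %| y)%N.
Proof.
move=> dvd_y; rewrite big_seq.
elim/big_ind: _ => [|n1 n2 dvd1 dvd2|i /dvd_y //]; first by rewrite gcd1n dvd1n.
by rewrite Order.NatDvd.meetUl dvdn_lcm dvd1 dvd2.
Qed.

Lemma dvdn_biglcm_seq (I : eqType) (s : seq I) (m : I -> nat) (i : I) :
  i \in s -> (m i %| \big[lcmn/1%N]_(j <- s) m j)%N.
Proof. by move=> s_i; rewrite (big_rem i s_i) dvdn_lcml. Qed.

Lemma chinese_seqz (I : eqType) (s : seq I) (m : I -> nat) (r : I -> int) :
  {in s &, forall i j, ((gcdn (m i) (m j))%:Z %| r i - r j)%Z} ->
  exists x : int, {in s, forall i, ((m i)%:Z %| x - r i)%Z}.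
Proof.
elim: s => [|b s IHs] compat; first by exists 0.
have [x x_sol] : exists x : int, {in s, forall i, ((m i)%:Z %| x - r i)%Z}.
  by apply: IHs => i j s_i s_j; apply: compat; rewrite inE ?s_i ?s_j orbT.
pose M := \big[lcmn/1%N]_(i <- s) m i.
have compat_b : (gcdz M%:Z (m b)%:Z %| r b - x)%Z.
  rewrite dvdzE /=; apply: dvdn_gcd_biglcm => i s_i.
  suff : ((gcdn (m i) (m b))%:Z %| r b - x)%Z by rewrite dvdzE.
  have -> : r b - x = (r b - r i) - (x - r i) by ring.
  rewrite rpredB //.
    by rewrite gcdnC compat ?mem_head // inE s_i orbT.
  by apply: dvdz_trans (x_sol i s_i); rewrite dvdzE dvdn_gcdl.
have [y [M_y b_y]] := chinese_gcdz _ _ _ _ compat_b.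
exists y => i; rewrite inE => /predU1P[-> // | s_i].
have -> : y - r i = (y - x) + (x - r i) by ring.
rewrite rpredD ?x_sol //; apply: dvdz_trans M_y.
by rewrite dvdzE; exact: dvdn_biglcm_seq.
Qed.

Theorem lemma3p10 (k : nat) (hk : (0 < k)%N) (A : pred nat)
  (hA : forall a : nat, a \in A -> (0 < a <= k)%N)
  (c : nat -> int)
  (hlcm : forall a a' : nat, a \in A -> a' \in A -> lcmn a a' \in A)
  (hc : forall a a' : nat, a \in A -> a' \in A ->
     ((c a' - c a) * (lcmn a a')%:Z = 0 %[mod k%:Z])%Z) :
  exists c0 : int, forall a : nat, a \in A ->
     ((c0 - c a) * a%:Z = 0 %[mod k%:Z])%Z.
Proof.
pose s := [seq a <- iota 0 k.+1 | a \in A].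
have s_A a : a \in s -> a \in A by rewrite mem_filter => /andP[].
have A_s a : a \in A -> a \in s.
  by move=> A_a; rewrite mem_filter A_a mem_iota ltnS; case/andP: (hA a A_a).
have [c0 c0_sol] : exists c0 : int,
    {in s, forall a, ((k %/ gcdn a k)%:Z %| c0 - c a)%Z}.
  apply: chinese_seqz => a a' /s_A A_a /s_A A_a'.
  move: (hc a' a A_a' A_a); rewrite mod0z => /dvdz_mod0P.
  rewrite dvdz_mulr_divgcd // => /(dvdz_trans _); apply.
  by rewrite dvdzE /= gcdnC dvdn_gcd_divgcd_lcm.
exists c0 => a /A_s s_a.
by rewrite mod0z; apply/dvdz_mod0P; rewrite dvdz_mulr_divgcd // c0_sol.
Qed.
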